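(* Let $\{G_i\}$ be a family of connected graphs with common induced subgraph $J$, embedded as $J_i\subseteq G_i$, and let $H=\amalg\{(G_i|J_i)\}$. Then every $G_i$ is isometrically embedded in $H$ if and only if the family $\{(G_i|J_i)\}$ is isometric.
   Context: $d_G$ is shortest-path distance in $G$. $J$ is a common induced subgraph of each $G_i$ via injective maps $\iota_i:V(J)\to V(G_i)$ with $\iota_i(x)\iota_i(y)\in E(G_i)$ iff $xy\in E(J)$; $J_i$ is the induced image and $x^i=\iota_i(x)$. $H=\amalg\{(G_i|J_i)\}$ is obtained from the disjoint union of the $G_i$ by identifying, for each $x\in V(J)$, all $x^i$ into one vertex; each $G_i$ is regarded as a subgraph of $H$. A subgraph $G$ of a graph $H$ is isometrically embedded in $H$ if $d_G(u,v)=d_H(u,v)$ for all $u,v\in V(G)$. The family $\{(G_i|J_i)\}$ is isometric if $d_{G_i}(a^i,b^i)=d_{G_j}(a^j,b^j)$ for all $i,j$ and all $a,b\in V(J)$. *)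

From Stdlib Require Import ClassicalEpsilon.
Set Implicit Arguments.
Unset Strict Implicit.

Record graph := Graph {
  vert : Type;
  adj : vert -> vert -> Prop;
  adj_sym : forall u v, adj u v -> adj v u;
  adj_irrefl : forall u, ~ adj u u
}.
Arguments adj : clear implicits.

Inductive walk {V : Type} (R : V -> V -> Prop) : V -> V -> nat -> Prop :=
| walk0 : forall u, walk R u u 0
| walkS : forall u w v n, R u w -> walk R w v n -> walk R u v (S n).

Definition is_dist {V : Type} (R : V -> V -> Prop) (u v : V) (n : nat) : Prop :=
  walk R u v n /\ forall m, walk R u v m -> n <= m.

(* shortest-path distance d(u,v) (meaningful whenever u, v are connected) *)
Definition dist {V : Type} (R : V -> V -> Prop) (u v : V) : nat :=
  epsilon (inhabits 0) (fun n => is_dist R u v n).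

Definition connected (G : graph) : Prop :=
  forall u v : vert G, exists n, walk (adj G) u v n.

Definition induced_embedding (J G : graph) (f : vert J -> vert G) : Prop :=
  (forall x y, f x = f y -> x = y) /\
  (forall x y, adj G (f x) (f y) <-> adj J x y).

(* The amalgam H = coprod (G_i | J_i): disjoint union of the G_i with all
   copies x^i of each x in V(J) identified.  Vertices of H: the vertices of J
   (the identified classes) plus the vertices of each G_i outside J_i. *)
Definition outer_vert (I : Type) (G : I -> graph) (J : graph)
  (iota : forall i, vert J -> vert (G i)) : Type :=
  {p : {i : I & vert (G i)} | ~ exists x, iota (projT1 p) x = projT2 p}.

Definition amal_vert (I : Type) (G : I -> graph) (J : graph)
  (iota : forall i, vert J -> vert (G i)) : Type := (vert J + outer_vert iota)%type.

(* the canonical map G_i -> H (the quotient map restricted to G_i) *)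
Definition amal_emb (I : Type) (G : I -> graph) (J : graph)
  (iota : forall i, vert J -> vert (G i)) (i : I) (v : vert (G i)) : amal_vert iota :=
  match excluded_middle_informative (exists x, iota i x = v) with
  | left h => inl (proj1_sig (constructive_indefinite_description _ h))
  | right h => inr (exist _ (existT _ i v) h)
  end.

Definition amal_adj (I : Type) (G : I -> graph) (J : graph)
  (iota : forall i, vert J -> vert (G i)) (a b : amal_vert iota) : Prop :=
  exists i (u v : vert (G i)), adj (G i) u v /\
    amal_emb iota u = a /\ amal_emb iota v = b.

Definition isometrically_embedded (I : Type) (G : I -> graph) (J : graph)
  (iota : forall i, vert J -> vert (G i)) (i : I) : Prop :=
  forall u v : vert (G i),
    dist (adj (G i)) u v = dist (@amal_adj _ _ _ iota) (amal_emb iota u) (amal_emb iota v).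

Definition isometric_family I (G : I -> graph) (J : graph)
  (iota : forall i, vert J -> vert (G i)) : Prop :=
  forall i j (a b : vert J),
    dist (adj (G i)) (iota i a) (iota i b) = dist (adj (G j)) (iota j a) (iota j b).

(** A walk in the amalgam [H] between two vertices of [G_i] splits at its
    visits to [J] into segments, each lying in a single [G_k].  Segments
    joining two vertices of [J] can be replaced by geodesics of [G_i] when
    the family is isometric, and a segment through an outer vertex of [G_i]
    already lies in [G_i]; so [H] offers no shortcut.  Conversely, an
    isometric embedding of every [G_i] makes all the distances
    [d_{G_i}(a^i, b^i)] equal to [d_H(a, b)]. *)

From Stdlib Require Import ClassicalEpsilon Classical Lia Eqdep Wf_nat.
Set Implicit Arguments.
Unset Strict Implicit.

Section Walks.

Variable V : Type.
Variable R : V -> V -> Prop.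

Lemma walk_cat u w v n m : walk R u w n -> walk R w v m -> walk R u v (n + m).
Proof. induction 1; intros; simpl; [assumption | econstructor; eauto]. Qed.

Lemma walk_map (W : Type) (S : W -> W -> Prop) (f : V -> W) u v n :
  (forall x y, R x y -> S (f x) (f y)) -> walk R u v n -> walk S (f u) (f v) n.
Proof. intros Hf; induction 1; econstructor; eauto. Qed.

Lemma is_dist_exists u v : (exists n, walk R u v n) -> exists n, is_dist R u v n.
Proof.
  intros Hwalk.
  destruct (dec_inh_nat_subset_has_unique_least_element (walk R u v)
              (fun n => classic _) Hwalk) as [n [Hn _]].
  now exists n.
Qed.

Lemma dist_spec u v : (exists n, walk R u v n) -> is_dist R u v (dist R u v).
Proof. intros Hwalk; exact (epsilon_spec _ _ (is_dist_exists Hwalk)). Qed.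

Lemma dist_le_walk u v n : walk R u v n -> dist R u v <= n.
Proof. intros Hw; apply (dist_spec (ex_intro _ n Hw)); exact Hw. Qed.

Lemma walk_dist u v : (exists n, walk R u v n) -> walk R u v (dist R u v).
Proof. intros Hwalk; apply (dist_spec Hwalk). Qed.

End Walks.

Lemma dist_eq_of_walk_shortening (V W : Type) (R : V -> V -> Prop) (S : W -> W -> Prop)
  (f : V -> W) u v :
  (forall x y, R x y -> S (f x) (f y)) -> (exists n, walk R u v n) ->
  (forall n, walk S (f u) (f v) n -> exists m, m <= n /\ walk R u v m) ->
  dist R u v = dist S (f u) (f v).
Proof.
  intros Hf Hwalk Hshort.
  pose proof (walk_map Hf (walk_dist Hwalk)) as Himage.
  destruct (Hshort _ (walk_dist (ex_intro _ _ Himage))) as [m [Hm Hw]].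
  pose proof (dist_le_walk Hw); pose proof (dist_le_walk Himage); lia.
Qed.

Section Amalgam.

Variables (I : Type) (G : I -> graph) (J : graph).
Variable iota : forall i, vert J -> vert (G i).
Hypothesis iota_inj : forall i x y, iota i x = iota i y -> x = y.

Local Notation emb := (amal_emb iota).
Local Notation amal := (@amal_adj _ _ _ iota).

Lemma amal_emb_inl i (v : vert (G i)) x : emb v = inl x -> v = iota i x.
Proof.
  unfold amal_emb; destruct excluded_middle_informative as [h|h]; [|discriminate].
  destruct (constructive_indefinite_description _ h) as [y Hy]; simpl.
  now intros [= ->].
Qed.

Lemma amal_emb_inr i (v : vert (G i)) o : emb v = inr o -> proj1_sig o = existT _ i v.
Proof.
  unfold amal_emb; destruct excluded_middle_informative; [discriminate|].
  now intros [= <-].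
Qed.

Lemma amal_emb_iota i x : emb (iota i x) = inl x.
Proof.
  unfold amal_emb; destruct excluded_middle_informative as [h|h].
  - destruct (constructive_indefinite_description _ h) as [y Hy]; simpl.
    now rewrite (iota_inj Hy).
  - exfalso; apply h; now exists x.
Qed.

Lemma amal_emb_outer_eq k l (p : vert (G k)) (q : vert (G l)) o :
  emb p = inr o -> emb q = inr o -> existT (fun i => vert (G i)) k p = existT _ l q.
Proof. intros Ep Eq; now rewrite <- (amal_emb_inr Ep), <- (amal_emb_inr Eq). Qed.

Lemma amal_emb_inj i (u v : vert (G i)) : emb u = emb v -> u = v.
Proof.
  intros Euv; destruct (emb v) as [x|o] eqn:Ev.
  - now rewrite (amal_emb_inl Euv), (amal_emb_inl Ev).
  - exact (inj_pair2 _ _ _ _ _ (amal_emb_outer_eq Euv Ev)).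
Qed.

Lemma isometric_family_of_embedded :
  (forall i, isometrically_embedded iota i) -> isometric_family iota.
Proof.
  intros Hemb i j a b; now rewrite (Hemb i), (Hemb j), !amal_emb_iota.
Qed.

Hypothesis G_connected : forall i, connected (G i).
Hypothesis family_isometric : isometric_family iota.

Lemma walk_iota_transfer k l x y n :
  walk (adj (G l)) (iota l x) (iota l y) n ->
  exists m, m <= n /\ walk (adj (G k)) (iota k x) (iota k y) m.
Proof.
  intros Hw; exists (dist (adj (G k)) (iota k x) (iota k y)); split.
  - rewrite (family_isometric k l); exact (dist_le_walk Hw).
  - apply walk_dist, G_connected.
Qed.

Section Target.

Variables (i : I) (v : vert (G i)).

Definition short_route k (q : vert (G k)) (N : nat) : Prop :=
  (exists q' m, emb q' = emb v /\ m <= N /\ walk (adj (G k)) q q' m) \/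
  (exists y m1 m2, walk (adj (G k)) q (iota k y) m1 /\
     walk (adj (G i)) (iota i y) v m2 /\ m1 + m2 <= N).

Lemma short_route_cons k (p q : vert (G k)) N :
  adj (G k) p q -> short_route q N -> short_route p (S N).
Proof.
  intros Hpq [[q' [m [Eq' [Hm Hw]]]] | [y [m1 [m2 [Hw1 [Hw2 Hm]]]]]].
  - left; exists q', (S m); repeat split; [assumption | lia | econstructor; eauto].
  - right; exists y, (S m1), m2; repeat split; [econstructor; eauto | assumption | lia].
Qed.

Lemma short_route_iota k l x N : short_route (iota l x) N -> short_route (iota k x) N.
Proof.
  intros [[q' [m [Eq' [Hm Hw]]]] | [y [m1 [m2 [Hw1 [Hw2 Hm]]]]]].
  - destruct (emb v) as [z|o] eqn:Ev.
    + rewrite (amal_emb_inl Eq') in Hw.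
      destruct (walk_iota_transfer k Hw) as [m' [Hm' Hw']].
      left; exists (iota k z), m'; split; [now rewrite amal_emb_iota, Ev | split; [lia | assumption]].
    + (* [v] is an outer vertex of [G_i], hence [l = i] and [q' = v]. *)
      pose proof (amal_emb_outer_eq Eq' Ev) as Elq'.
      injection Elq' as -> Eq''; apply inj_pair2 in Eq''; subst q'.
      right; exists x, 0, m; repeat split; [constructor | assumption | lia].
  - destruct (walk_iota_transfer k Hw1) as [m1' [Hm1' Hw1']].
    right; exists y, m1', m2; repeat split; [assumption | assumption | lia].
Qed.

Lemma short_route_emb k l (p : vert (G l)) (q : vert (G k)) N :
  emb p = emb q -> short_route p N -> short_route q N.
Proof.
  intros Epq; destruct (emb q) as [x|o] eqn:Eq.
  - rewrite (amal_emb_inl Epq), (amal_emb_inl Eq); apply short_route_iota.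
  - pose proof (amal_emb_outer_eq Epq Eq) as Elk.
    injection Elk as -> Epq'; apply inj_pair2 in Epq'; now subst p.
Qed.

Lemma short_route_of_walk a b n :
  walk amal a b n -> b = emb v -> forall k (q : vert (G k)), emb q = a -> short_route q n.
Proof.
  induction 1 as [a | a c b n Hac Hw IH]; intros -> k q Eq.
  - left; exists q, 0; repeat split; [assumption | lia | constructor].
  - destruct Hac as [l [p [p' [Hpp' [Ep Ep']]]]].
    apply (short_route_emb (p := p)); [congruence|].
    exact (short_route_cons Hpp' (IH eq_refl _ _ Ep')).
Qed.

Lemma walk_amal_shortening (u : vert (G i)) n :
  walk amal (emb u) (emb v) n -> exists m, m <= n /\ walk (adj (G i)) u v m.
Proof.
  intros Hw.
  destruct (short_route_of_walk Hw eq_refl (q := u) eq_refl)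
    as [[v' [m [Ev' [Hm Hw']]]] | [y [m1 [m2 [Hw1 [Hw2 Hm]]]]]].
  - rewrite (amal_emb_inj Ev') in Hw'; eauto.
  - exists (m1 + m2); split; [lia | exact (walk_cat Hw1 Hw2)].
Qed.

End Target.

Lemma embedded_of_isometric_family i : isometrically_embedded iota i.
Proof.
  intros u v; apply dist_eq_of_walk_shortening.
  - intros x y Hxy; now exists i, x, y.
  - apply G_connected.
  - apply walk_amal_shortening.
Qed.

End Amalgam.

Theorem lemma2 (I : Type) (G : I -> graph) (J : graph)
  (iota : forall i, vert J -> vert (G i))
  (Hind : forall i, induced_embedding (iota i))
  (Hconn : forall i, connected (G i)) :
  (forall i, isometrically_embedded iota i) <-> isometric_family iota.
Proof.
  assert (iota_inj : forall i x y, iota i x = iota i y -> x = y)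
    by (intros i; apply (Hind i)).
  split.
  - exact (isometric_family_of_embedded iota_inj).
  - intros Hiso i; exact (@embedded_of_isometric_family _ _ _ _ iota_inj Hconn Hiso i).
Qed.
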